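(* Let $N\ge1$, $n=\sum_{\nu=1}^N n_\nu$, $m\ge1$. For $\nu=1,\dots,N$ let $Q_\nu\in\mathbb{R}^{n_\nu\times n_\nu}$ be symmetric positive definite, $c_\nu\in\mathbb{R}^{n_\nu}$, and $X_\nu\subseteq\mathbb{R}^{n_\nu}$ nonempty, convex and closed; let $X=X_1\times\dots\times X_N$. Let $a\in\mathbb{R}^m$, $a\ge0$, $Q_y\in\mathbb{R}^{m\times m}$ positive definite diagonal, and $b,l:\mathbb{R}^n\to\mathbb{R}^m$ differentiable. Define $\varphi(x)=\sum_{i=1}^m a_i\max\{(Q_y^{-1}b(x))_i,l_i(x)\}$ and $\Theta(x)=\sum_{\nu=1}^N[\tfrac12 x_\nu^\top Q_\nu x_\nu+c_\nu^\top x_\nu]+\varphi(x)$. Assume there exist $\rho\ge0$ and $\omega_1,\omega_2\in\mathbb{R}$ such that $\min\{0,\varphi(x)\}\ge\omega_1\|x\|+\omega_2$ for all $x\in X$ with $\|x\|>\rho$. Let $x^*$ be a global minimizer of $\Theta$ over $X$. Then $x^*$ is a Nash equilibrium of the multi-leader-follower game described in the context.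
   Context: Notation: $x=(x_1,\dots,x_N)$, $x_\nu\in\mathbb{R}^{n_\nu}$, $x_{-\nu}$ = all components other than $x_\nu$. Multi-leader-follower game: given $x$, the follower solves $\min_{y\in\mathbb{R}^m}\tfrac12 y^\top Q_y y-b(x)^\top y$ s.t. $y\ge l(x)$, whose unique solution is $y(x)=\max\{Q_y^{-1}b(x),l(x)\}$ (componentwise); leader $\nu$ solves $\min_{x_\nu\in X_\nu}\theta_\nu(x_\nu,x_{-\nu})=\tfrac12 x_\nu^\top Q_\nu x_\nu+c_\nu^\top x_\nu+a^\top y(x)$. A Nash equilibrium is $x^*\in X$ with $\theta_\nu(x^*_\nu,x^*_{-\nu})\le\theta_\nu(x_\nu,x^*_{-\nu})$ for all $x_\nu\in X_\nu$ and all $\nu$. *)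

From HB Require Import structures.
From mathcomp Require Import all_boot all_order all_algebra.
From mathcomp Require Import all_classical all_reals all_analysis.
Set Implicit Arguments. Unset Strict Implicit. Unset Printing Implicit Defensive.
Import Order.TTheory GRing.Theory Num.Theory.
Import numFieldNormedType.Exports.
Local Open Scope classical_set_scope.
Local Open Scope ring_scope.

(* A point x of R^n, n = \sum_nu n_ nu, is a column vector of size
   \sum_nu n_ nu; its nu-th block x_nu is [submxcol x nu]. *)

Section Defs.
Variable R : realType.

Definition enorm (k : nat) (v : 'cV[R]_k) : R := Num.sqrt (\sum_i v i 0 ^+ 2).

Definition spd (k : nat) (Q : 'M[R]_k) : Prop :=
  Q^T = Q /\ forall v : 'cV[R]_k, v != 0 -> 0 < (v^T *m Q *m v) 0 0.

Definition pd_diag (k : nat) (Q : 'M[R]_k) : Prop :=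
  is_diag_mx Q /\ forall i, 0 < Q i i.

Definition convex_setR (k : nat) (A : set 'cV[R]_k) : Prop :=
  forall u v (t : R), A u -> A v -> 0 <= t -> t <= 1 ->
    A (t *: u + (1 - t) *: v).

Definition inprod (k : nat) (u v : 'cV[R]_k) : R := (u^T *m v) 0 0.

Definition quadform (k : nat) (Q : 'M[R]_k) (v : 'cV[R]_k) : R :=
  (v^T *m Q *m v) 0 0.

Variables (N : nat) (n_ : 'I_N -> nat) (m : nat).
Notation vecX := 'cV[R]_(\sum_(nu < N) n_ nu).

Definition inX (Xs : forall nu : 'I_N, set 'cV[R]_(n_ nu)) (x : vecX) : Prop :=
  forall nu, Xs nu (submxcol x nu).

(* follower's solution y(x) = max{Q_y^{-1} b(x), l(x)} componentwise *)
Definition yfol (Qy : 'M[R]_m) (b l : vecX -> 'cV[R]_m) (x : vecX) : 'cV[R]_m :=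
  \col_i Num.max ((invmx Qy *m b x) i 0) (l x i 0).

Definition phi (a : 'cV[R]_m) (Qy : 'M[R]_m) (b l : vecX -> 'cV[R]_m) (x : vecX) : R :=
  \sum_i a i 0 * Num.max ((invmx Qy *m b x) i 0) (l x i 0).

Definition Theta (Qs : forall nu : 'I_N, 'M[R]_(n_ nu))
  (cs : forall nu : 'I_N, 'cV[R]_(n_ nu)) (a : 'cV[R]_m) (Qy : 'M[R]_m)
  (b l : vecX -> 'cV[R]_m) (x : vecX) : R :=
  \sum_(nu < N) (2^-1 * quadform (Qs nu) (submxcol x nu)
                  + inprod (cs nu) (submxcol x nu))
  + phi a Qy b l x.

Definition theta (Qs : forall nu : 'I_N, 'M[R]_(n_ nu))
  (cs : forall nu : 'I_N, 'cV[R]_(n_ nu)) (a : 'cV[R]_m) (Qy : 'M[R]_m)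
  (b l : vecX -> 'cV[R]_m) (nu : 'I_N) (x : vecX) : R :=
  2^-1 * quadform (Qs nu) (submxcol x nu) + inprod (cs nu) (submxcol x nu)
  + inprod a (yfol Qy b l x).

Definition nash_eq (Xs : forall nu : 'I_N, set 'cV[R]_(n_ nu))
  (Qs : forall nu : 'I_N, 'M[R]_(n_ nu)) (cs : forall nu : 'I_N, 'cV[R]_(n_ nu))
  (a : 'cV[R]_m) (Qy : 'M[R]_m) (b l : vecX -> 'cV[R]_m) (xs : vecX) : Prop :=
  inX Xs xs /\
  forall (nu : 'I_N) (x : vecX),
    (forall mu, mu != nu -> submxcol x mu = submxcol xs mu) ->
    Xs nu (submxcol x nu) ->
    theta Qs cs a Qy b l nu xs <= theta Qs cs a Qy b l nu x.

End Defs.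

From HB Require Import structures.
From mathcomp Require Import all_boot all_order all_algebra.
From mathcomp Require Import all_classical all_reals all_analysis.
Set Implicit Arguments. Unset Strict Implicit. Unset Printing Implicit Defensive.
Import Order.TTheory GRing.Theory Num.Theory.
Import numFieldNormedType.Exports.
Local Open Scope classical_set_scope.
Local Open Scope ring_scope.

(* Theta is an exact potential of the game: since a^T y(x) = phi(x), leader
   nu's objective is Theta minus the private costs of the other leaders, and
   these do not change when only x_nu moves.  Hence a unilateral deviation
   changes theta_nu and Theta by the same amount, and a global minimizer of
   Theta over X admits no profitable deviation. *)

Section PotentialGame.
Variables (R : realType) (N : nat) (n_ : 'I_N -> nat) (m : nat).
Notation vecX := 'cV[R]_(\sum_(nu < N) n_ nu).

Variables (Qs : forall nu : 'I_N, 'M[R]_(n_ nu))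
  (cs : forall nu : 'I_N, 'cV[R]_(n_ nu))
  (a : 'cV[R]_m) (Qy : 'M[R]_m) (b l : vecX -> 'cV[R]_m).

Definition private_cost (nu : 'I_N) (x : vecX) : R :=
  2^-1 * quadform (Qs nu) (submxcol x nu) + inprod (cs nu) (submxcol x nu).

Definition unilateral (nu : 'I_N) (x x' : vecX) : Prop :=
  forall mu, mu != nu -> submxcol x mu = submxcol x' mu.

Lemma inprod_yfol (x : vecX) : inprod a (yfol Qy b l x) = phi a Qy b l x.
Proof. by rewrite /inprod /phi mxE; apply: eq_bigr => i _; rewrite !mxE. Qed.

Lemma Theta_split (nu : 'I_N) (x : vecX) :
  Theta Qs cs a Qy b l x =
  \sum_(mu < N | mu != nu) private_cost mu x + theta Qs cs a Qy b l nu x.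
Proof.
rewrite /Theta /theta inprod_yfol (bigD1 nu) //= -/(private_cost nu x).
by rewrite (addrC (private_cost nu x)) -addrA.
Qed.

Lemma sum_private_cost_unilateral (nu : 'I_N) (x x' : vecX) :
  unilateral nu x x' ->
  \sum_(mu < N | mu != nu) private_cost mu x =
  \sum_(mu < N | mu != nu) private_cost mu x'.
Proof. by move=> ux; apply: eq_bigr => mu ne; rewrite /private_cost ux. Qed.

Lemma theta_le_unilateral (nu : 'I_N) (x x' : vecX) :
  unilateral nu x x' ->
  Theta Qs cs a Qy b l x' <= Theta Qs cs a Qy b l x ->
  theta Qs cs a Qy b l nu x' <= theta Qs cs a Qy b l nu x.
Proof.
move=> ux; rewrite !(Theta_split nu) (sum_private_cost_unilateral ux).
by rewrite lerD2l.
Qed.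

Lemma inX_unilateral (Xs : forall nu : 'I_N, set 'cV[R]_(n_ nu))
    (nu : 'I_N) (x x' : vecX) :
  inX Xs x' -> unilateral nu x x' -> Xs nu (submxcol x nu) -> inX Xs x.
Proof.
move=> x'X ux xnu mu; case: (eqVneq mu nu) => [-> // | ne].
by rewrite ux //; apply: x'X.
Qed.

End PotentialGame.

Theorem mainTheorem4 (R : realType) (N : nat) (n_ : 'I_N -> nat) (m : nat)
  (Qs : forall nu : 'I_N, 'M[R]_(n_ nu))
  (cs : forall nu : 'I_N, 'cV[R]_(n_ nu))
  (Xs : forall nu : 'I_N, set 'cV[R]_(n_ nu))
  (a : 'cV[R]_m) (Qy : 'M[R]_m)
  (b l : 'cV[R]_(\sum_(nu < N) n_ nu) -> 'cV[R]_m)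
  (xs : 'cV[R]_(\sum_(nu < N) n_ nu)) :
  (0 < N)%N -> (0 < m)%N ->
  (forall nu, spd (Qs nu)) ->
  (forall nu, Xs nu !=set0 /\ convex_setR (Xs nu) /\ closed (Xs nu)) ->
  (forall i, 0 <= a i 0) ->
  pd_diag Qy ->
  (forall x, differentiable b x) ->
  (forall x, differentiable l x) ->
  (exists (rho w1 w2 : R), 0 <= rho /\
     forall x, inX Xs x -> rho < enorm x ->
       Num.min 0 (phi a Qy b l x) >= w1 * enorm x + w2) ->
  inX Xs xs ->
  (forall x, inX Xs x -> Theta Qs cs a Qy b l xs <= Theta Qs cs a Qy b l x) ->
  nash_eq Xs Qs cs a Qy b l xs.
Proof.
move=> _ _ _ _ _ _ _ _ _ xsX xs_min; split=> // nu x ux xnu.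
apply: (theta_le_unilateral ux); apply: xs_min.
exact: inX_unilateral xsX ux xnu.
Qed.
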